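(* Let $X$ be a non-degenerate random variable with $E|X|<\infty$ and continuous cumulative distribution function, and suppose that the expectile function $\alpha\mapsto e_X(\alpha)$ is four times continuously differentiable on $(0,1)$. Then $s_2$ is differentiable on $(0,1/2)$ and $$\lim_{\alpha\to 1/2-} s_2'(\alpha) = 0 .$$
   Context: For a random variable $X$ with $E|X|<\infty$ and $\tau\in(0,1)$, the $\tau$-expectile $e_X(\tau)$ is the unique real number $t$ satisfying $\tau\, E(X-t)_+ = (1-\tau)\, E(X-t)_-$, where $x_+=\max\{x,0\}$ and $x_-=\max\{-x,0\}$; $e_X(1/2)=\mu=EX$. For $\alpha\in(0,1/2)$ the normalized expectile skewness is $$s_2(\alpha) = \frac{1}{1-2\alpha}\cdot\frac{e_X(1-\alpha)+e_X(\alpha)-2\mu}{e_X(1-\alpha)-e_X(\alpha)}.$$ *)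

From Stdlib Require Import Reals Lra.
Open Scope R_scope.

(* The law of a real random variable X is encoded by its cumulative
   distribution function F(x) = P(X <= x): nondecreasing, right-continuous,
   with limits 0 at -infinity and 1 at +infinity. *)
Definition is_cdf (F : R -> R) : Prop :=
  (forall x y, x <= y -> F x <= F y) /\
  (forall x eps, 0 < eps -> exists d, 0 < d /\
       forall y, x <= y < x + d -> Rabs (F y - F x) < eps) /\
  (forall eps, 0 < eps -> exists M, forall x, x <= M -> Rabs (F x) < eps) /\
  (forall eps, 0 < eps -> exists M, forall x, M <= x -> Rabs (1 - F x) < eps).

(* Non-degenerate: X is not a.s. constant, i.e. 0 < F x < 1 for some x. *)
Definition nondegenerate (F : R -> R) : Prop :=
  exists x, 0 < F x < 1.

Definition improper_int_to_pinfty (f : R -> R) (a l : R) : Prop :=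
  forall eps, 0 < eps -> exists M, forall b, M <= b ->
    exists pr : Riemann_integrable f a b, Rabs (RiemannInt pr - l) < eps.

Definition improper_int_from_minfty (f : R -> R) (b l : R) : Prop :=
  forall eps, 0 < eps -> exists M, forall a, a <= M ->
    exists pr : Riemann_integrable f a b, Rabs (RiemannInt pr - l) < eps.

(* E (X - t)_+ = int_t^{+oo} (1 - F x) dx  and
   E (X - t)_- = int_{-oo}^t F x dx   (valid for every law with cdf F). *)
Definition Epos (F : R -> R) (t l : R) : Prop :=
  improper_int_to_pinfty (fun x => 1 - F x) t l.
Definition Eneg (F : R -> R) (t l : R) : Prop :=
  improper_int_from_minfty F t l.

(* E|X| < oo  iff  E X_+ and E X_- are finite. *)
Definition finite_first_moment (F : R -> R) : Prop :=
  exists p n, Epos F 0 p /\ Eneg F 0 n.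

Definition is_mean (F : R -> R) (mu : R) : Prop :=
  exists p n, Epos F 0 p /\ Eneg F 0 n /\ mu = p - n.

Definition is_expectile (F : R -> R) (tau t : R) : Prop :=
  exists p n, Epos F t p /\ Eneg F t n /\ tau * p = (1 - tau) * n.

Definition C4_on_01 (e : R -> R) : Prop :=
  exists d1 d2 d3 d4 : R -> R, forall a, 0 < a < 1 ->
    derivable_pt_lim e a (d1 a) /\ derivable_pt_lim d1 a (d2 a) /\
    derivable_pt_lim d2 a (d3 a) /\ derivable_pt_lim d3 a (d4 a) /\
    continuity_pt d4 a.

Definition s2 (e : R -> R) (mu alpha : R) : R :=
  (1 / (1 - 2 * alpha)) *
  ((e (1 - alpha) + e alpha - 2 * mu) / (e (1 - alpha) - e alpha)).

(* Write K(t) = E(X-t)_- = n0 + int_0^t F and P(t) = E(X-t)_+ = p0 - t + int_0^t F,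
   so that K' = F and the expectile equation reads tau P(e tau) = (1 - tau) K(e tau).
   Differentiating it gives e'(tau) ((1 - tau) F + tau (1 - F))(e tau) = E|X - e tau| > 0,
   so e is strictly increasing; at tau = 1/2 it gives e(1/2) = mu.
   With h = 1/2 - alpha, the even part A(h) = e(1/2 + h) + e(1/2 - h) - 2 mu and the odd
   part D(h) = e(1/2 + h) - e(1/2 - h) give s2(alpha) = A / (2 h D), whence
   s2'(alpha) = - (D (h A' - 2 A) - A (h D' - D)) / (2 h^2 D^2).
   Expanding e to third order at 1/2: D >= e'(1/2) h, A = O(h^2), h A' - 2 A = o(h^3)
   and h D' - D = o(h^2), so s2'(alpha) = o(1). *)

From Stdlib Require Import Reals Lra.
From Coquelicot Require Import Coquelicot.
Open Scope R_scope.

Lemma Rabs_increment_sub_le (g g1 : R -> R) (L K h : R) : 0 <= h ->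
  (forall s, 0 <= s <= h -> is_derive g s (g1 s)) ->
  (forall s, 0 <= s <= h -> Rabs (g1 s - L) <= K) ->
  Rabs (g h - g 0 - L * h) <= K * h.
Proof.
  intros Hh Hg Hb.
  destruct (MVT_gen g 0 h g1) as [s [Hs Hincr]].
  - intros s Hs. apply Hg. rewrite Rmin_left, Rmax_right in Hs by lra. lra.
  - intros s Hs. apply derivable_continuous_pt.
    exists (g1 s). apply is_derive_Reals, Hg. rewrite Rmin_left, Rmax_right in Hs by lra. exact Hs.
  - rewrite Rmin_left, Rmax_right in Hs by lra.
    rewrite Hincr, Rminus_0_r.
    replace (g1 s * h - L * h) with ((g1 s - L) * h) by ring.
    rewrite Rabs_mult, (Rabs_pos_eq h) by exact Hh.
    apply Rmult_le_compat_r; [exact Hh | exact (Hb s Hs)].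
Qed.

Lemma Rabs_increment_sub_le_2 (g g1 g2 : R -> R) (K h : R) : 0 <= h ->
  (forall s, 0 <= s <= h -> is_derive g s (g1 s) /\ is_derive g1 s (g2 s)) ->
  (forall s, 0 <= s <= h -> Rabs (g2 s) <= K) ->
  Rabs (g h - g 0 - g1 0 * h) <= K * h ^ 2.
Proof.
  intros Hh Hg Hb.
  replace (K * h ^ 2) with ((K * h) * h) by ring.
  apply (Rabs_increment_sub_le g g1); [exact Hh | intros s Hs; apply Hg, Hs |].
  intros s Hs.
  assert (HK : 0 <= K) by (apply Rle_trans with (Rabs (g2 0)); [apply Rabs_pos | apply Hb; lra]).
  apply Rle_trans with (K * s); [| apply Rmult_le_compat_l; lra].
  replace (g1 s - g1 0) with (g1 s - g1 0 - 0 * s) by ring.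
  apply (Rabs_increment_sub_le g1 g2); [lra | intros t Ht; apply Hg; lra |].
  intros t Ht. rewrite Rminus_0_r. apply Hb. lra.
Qed.

Lemma is_derive_pos_lt (f f' : R -> R) (a b : R) : a < b ->
  (forall x, a <= x <= b -> is_derive f x (f' x)) -> (forall x, a <= x <= b -> 0 < f' x) ->
  f a < f b.
Proof.
  intros Hab Hf Hpos.
  destruct (MVT_cor2 f f' a b Hab) as [c [Hincr Hc]]; [intros; apply is_derive_Reals, Hf; lra |].
  pose proof (Hpos c ltac:(lra)). nra.
Qed.

Lemma is_derive_continuous (g : R -> R) (x l : R) : is_derive g x l -> continuous g x.
Proof.
  intro H. apply continuity_pt_filterlim, derivable_continuous_pt.
  exists l. apply is_derive_Reals, H.
Qed.

Lemma locally_abs_sub_lt (f : R -> R) (c eta : R) :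
  continuous f c -> 0 < eta -> locally c (fun x => Rabs (f x - f c) < eta).
Proof.
  intros Hf Heta. exact (Hf _ (locally_ball (f c) (mkposreal eta Heta))).
Qed.

Lemma at_right_0_sym_interval (P : R -> Prop) (c : R) :
  locally c P -> at_right 0 (fun h => forall s, 0 <= s <= h -> P (c + s) /\ P (c - s)).
Proof.
  intros [d Hd]. exists d. intros h Hh Hpos s Hs.
  change (Rabs (h - 0) < d) in Hh. rewrite Rminus_0_r, Rabs_pos_eq in Hh by lra.
  split; apply Hd.
  - change (Rabs (c + s - c) < d). replace (c + s - c) with s by ring.
    rewrite Rabs_pos_eq; lra.
  - change (Rabs (c - s - c) < d). replace (c - s - c) with (- s) by ring.
    rewrite Rabs_Ropp, Rabs_pos_eq; lra.
Qed.

Lemma at_right_0_interval (P : R -> Prop) :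
  at_right 0 P -> exists d, 0 < d /\ forall h, 0 < h < d -> P h.
Proof.
  intros [d Hd]. exists d. split; [apply cond_pos |].
  intros h Hh. apply Hd; [change (Rabs (h - 0) < d); rewrite Rminus_0_r, Rabs_pos_eq |]; lra.
Qed.

Lemma continuous_pos_near (g : R -> R) (x : R) : continuous g x -> 0 < g x ->
  exists h, 0 < h /\ forall y, x - h <= y <= x + h -> 0 < g y.
Proof.
  intros Hg Hpos. destruct (locally_abs_sub_lt g x (g x) Hg Hpos) as [d Hd].
  exists (d / 2). split; [pose proof (cond_pos d); lra |].
  intros y Hy. assert (Hball : Rabs (g y - g x) < g x).
  { apply Hd. change (Rabs (y - x) < d). apply Rabs_def1; pose proof (cond_pos d); lra. }
  apply Rabs_def2 in Hball. lra.
Qed.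

Definition sym_sum (f : R -> R) (c s : R) : R := f (c + s) + f (c - s).
Definition sym_diff (f : R -> R) (c s : R) : R := f (c + s) - f (c - s).

Lemma is_derive_sym_sum (f f' : R -> R) (c s : R) :
  is_derive f (c + s) (f' (c + s)) -> is_derive f (c - s) (f' (c - s)) ->
  is_derive (sym_sum f c) s (sym_diff f' c s).
Proof.
  intros Hp Hm. unfold sym_sum, sym_diff. auto_derive.
  - repeat split; [exists (f' (c + s)) | exists (f' (c - s))]; [exact Hp|].
    replace (c + - s) with (c - s) by ring. exact Hm.
  - replace (c + - s) with (c - s) by ring.
    rewrite (is_derive_unique (fun x : R => f x) _ _ Hp),
      (is_derive_unique (fun x : R => f x) _ _ Hm).
    ring.
Qed.

Lemma is_derive_sym_diff (f f' : R -> R) (c s : R) :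
  is_derive f (c + s) (f' (c + s)) -> is_derive f (c - s) (f' (c - s)) ->
  is_derive (sym_diff f c) s (sym_sum f' c s).
Proof.
  intros Hp Hm. unfold sym_sum, sym_diff. auto_derive.
  - repeat split; [exists (f' (c + s)) | exists (f' (c - s))]; [exact Hp|].
    replace (c + - s) with (c - s) by ring. exact Hm.
  - replace (c + - s) with (c - s) by ring.
    rewrite (is_derive_unique (fun x : R => f x) _ _ Hp),
      (is_derive_unique (fun x : R => f x) _ _ Hm).
    ring.
Qed.

Lemma sym_sum_0 (f : R -> R) (c : R) : sym_sum f c 0 = 2 * f c.
Proof. unfold sym_sum. rewrite Rplus_0_r, Rminus_0_r. ring. Qed.

Lemma sym_diff_0 (f : R -> R) (c : R) : sym_diff f c 0 = 0.
Proof. unfold sym_diff. rewrite Rplus_0_r, Rminus_0_r. ring. Qed.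

Lemma is_derive_mul_id_sub (G H : R -> R) (g x : R) :
  is_derive H x (G x) -> is_derive G x g ->
  is_derive (fun t => t * G t - H t) x (x * g).
Proof.
  intros HH HG. auto_derive.
  - repeat split; [exists g; exact HG | exists (G x); exact HH].
  - rewrite (is_derive_unique (fun t : R => G t) _ _ HG),
      (is_derive_unique (fun t : R => H t) _ _ HH).
    ring.
Qed.

Lemma sym_parts_close (g : R -> R) (c eta : R) : continuous g c -> 0 < eta ->
  at_right 0 (fun h => forall s, 0 <= s <= h ->
    Rabs (sym_sum g c s - 2 * g c) <= eta /\ Rabs (sym_diff g c s) <= eta).
Proof.
  intros Hg Heta.
  apply (filter_imp (fun h => forall s, 0 <= s <= h ->
    Rabs (g (c + s) - g c) < eta / 2 /\ Rabs (g (c - s) - g c) < eta / 2)).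
  - intros h Hclose s Hs. destruct (Hclose s Hs) as [Hp Hm].
    unfold sym_sum, sym_diff.
    replace (g (c + s) + g (c - s) - 2 * g c) with ((g (c + s) - g c) + (g (c - s) - g c)) by ring.
    replace (g (c + s) - g (c - s)) with ((g (c + s) - g c) + - (g (c - s) - g c)) by ring.
    split; (eapply Rle_trans; [apply Rabs_triang |]); rewrite ?Rabs_Ropp; lra.
  - apply (at_right_0_sym_interval (fun x => Rabs (g x - g c) < eta / 2)).
    apply locally_abs_sub_lt; [exact Hg | lra].
Qed.

Section SymmetricExpansion.

Variables (f f1 f2 f3 : R -> R) (c : R).

Let derivs_at (x : R) : Prop :=
  is_derive f x (f1 x) /\ is_derive f1 x (f2 x) /\ is_derive f2 x (f3 x).

Hypothesis f_derivs : locally c derivs_at.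
Hypothesis f3_cont : continuous f3 c.

Lemma sym_derivs : at_right 0 (fun h => forall s, 0 <= s <= h ->
  is_derive (sym_diff f c) s (sym_sum f1 c s) /\ is_derive (sym_sum f c) s (sym_diff f1 c s) /\
  is_derive (sym_diff f1 c) s (sym_sum f2 c s) /\ is_derive (sym_sum f1 c) s (sym_diff f2 c s) /\
  is_derive (sym_sum f2 c) s (sym_diff f3 c s)).
Proof.
  refine (filter_imp _ _ _ (at_right_0_sym_interval _ _ f_derivs)).
  intros h Hd s Hs. destruct (Hd s Hs) as [[Hp0 [Hp1 Hp2]] [Hm0 [Hm1 Hm2]]].
  split; [| split; [| split; [| split]]];
    first [apply is_derive_sym_sum | apply is_derive_sym_diff]; assumption.
Qed.

Lemma sym_expansion_near (g : R -> R) (eta : R) : continuous g c -> 0 < eta ->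
  at_right 0 (fun h => 0 < h /\
    (forall s, 0 <= s <= h ->
      is_derive (sym_diff f c) s (sym_sum f1 c s) /\ is_derive (sym_sum f c) s (sym_diff f1 c s) /\
      is_derive (sym_diff f1 c) s (sym_sum f2 c s) /\ is_derive (sym_sum f1 c) s (sym_diff f2 c s) /\
      is_derive (sym_sum f2 c) s (sym_diff f3 c s)) /\
    (forall s, 0 <= s <= h ->
      Rabs (sym_sum g c s - 2 * g c) <= eta /\ Rabs (sym_diff g c s) <= eta)).
Proof.
  intros Hg Heta.
  apply filter_and; [| apply filter_and;
    [exact sym_derivs | exact (sym_parts_close g c eta Hg Heta)]].
  exists (mkposreal 1 Rlt_0_1). intros h _ Hh. exact Hh.
Qed.

Lemma f1_cont : continuous f1 c.
Proof. apply (is_derive_continuous _ _ (f2 c)), (locally_singleton _ _ f_derivs). Qed.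

Lemma f2_cont : continuous f2 c.
Proof. apply (is_derive_continuous _ _ (f3 c)), (locally_singleton _ _ f_derivs). Qed.

Lemma sym_diff_first_order (eta : R) : 0 < eta ->
  at_right 0 (fun h => Rabs (sym_diff f c h - 2 * f1 c * h) <= eta * h).
Proof.
  intros Heta.
  refine (filter_imp _ _ _ (sym_expansion_near f1 eta f1_cont Heta)).
  intros h [Hh [Hd Hclose]].
  replace (sym_diff f c h - 2 * f1 c * h) with (sym_diff f c h - sym_diff f c 0 - 2 * f1 c * h)
    by (rewrite sym_diff_0; ring).
  apply (Rabs_increment_sub_le _ (sym_sum f1 c)); [lra | apply Hd | apply Hclose].
Qed.

Lemma sym_sum_second_order :
  at_right 0 (fun h => Rabs (sym_sum f c h - 2 * f c) <= 2 * (Rabs (f2 c) + 1) * h ^ 2).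
Proof.
  refine (filter_imp _ _ _ (sym_expansion_near f2 1 f2_cont Rlt_0_1)).
  intros h [Hh [Hd Hclose]].
  replace (sym_sum f c h - 2 * f c) with (sym_sum f c h - sym_sum f c 0 - sym_diff f1 c 0 * h)
    by (rewrite sym_sum_0, sym_diff_0; ring).
  apply (Rabs_increment_sub_le_2 _ _ (sym_sum f2 c)); [lra | intros s Hs; split; apply Hd, Hs |].
  intros s Hs. destruct (Hclose s Hs) as [Hs2 _].
  replace (sym_sum f2 c s) with ((sym_sum f2 c s - 2 * f2 c) + 2 * f2 c) by ring.
  eapply Rle_trans; [apply Rabs_triang |].
  rewrite Rabs_mult, (Rabs_pos_eq 2) by lra. lra.
Qed.

Lemma sym_diff_remainder (eta : R) : 0 < eta ->
  at_right 0 (fun h => Rabs (h * sym_sum f1 c h - sym_diff f c h) <= eta * h ^ 2).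
Proof.
  intros Heta.
  refine (filter_imp _ _ _ (sym_expansion_near f2 eta f2_cont Heta)).
  intros h [Hh [Hd Hclose]].
  set (v := fun t => t * sym_sum f1 c t - sym_diff f c t).
  replace (h * sym_sum f1 c h - sym_diff f c h) with (v h - v 0 - 0 * h)
    by (unfold v; rewrite sym_diff_0; ring).
  replace (eta * h ^ 2) with ((h * eta) * h) by ring.
  apply (Rabs_increment_sub_le v (fun t => t * sym_diff f2 c t)); [lra | |].
  - intros s Hs. apply is_derive_mul_id_sub; apply Hd, Hs.
  - intros s Hs. rewrite Rminus_0_r, Rabs_mult, Rabs_pos_eq by lra.
    apply Rmult_le_compat; [lra | apply Rabs_pos | lra | apply (Hclose s Hs)].
Qed.

Lemma sym_sum_remainder (eta : R) : 0 < eta ->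
  at_right 0 (fun h => Rabs (h * sym_diff f1 c h - 2 * (sym_sum f c h - 2 * f c)) <= eta * h ^ 3).
Proof.
  intros Heta.
  refine (filter_imp _ _ _ (sym_expansion_near f3 eta f3_cont Heta)).
  intros h [Hh [Hd Hclose]].
  set (u := fun t => t * sym_diff f1 c t - 2 * sym_sum f c t).
  set (u1 := fun t => t * sym_sum f2 c t - sym_diff f1 c t).
  replace (h * sym_diff f1 c h - 2 * (sym_sum f c h - 2 * f c)) with (u h - u 0 - u1 0 * h)
    by (unfold u, u1; rewrite sym_sum_0, sym_diff_0; ring).
  replace (eta * h ^ 3) with ((h * eta) * h ^ 2) by ring.
  apply (Rabs_increment_sub_le_2 u u1 (fun t => t * sym_diff f3 c t)); [lra | |].
  - intros s Hs. destruct (Hd s Hs) as [_ [Hs1 [Hs2 [Hs3 Hs4]]]]. split.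
    + unfold u, u1. auto_derive.
      * split; [exists (sym_sum f2 c s); exact Hs2 |].
        split; [exists (sym_diff f1 c s); exact Hs1 | easy].
      * rewrite (is_derive_unique (fun t : R => sym_diff f1 c t) _ _ Hs2),
          (is_derive_unique (fun t : R => sym_sum f c t) _ _ Hs1).
        ring.
    + apply is_derive_mul_id_sub; assumption.
  - intros s Hs. rewrite Rabs_mult, Rabs_pos_eq by lra.
    apply Rmult_le_compat; [lra | apply Rabs_pos | lra | apply (Hclose s Hs)].
Qed.

End SymmetricExpansion.

Definition s2_deriv (e d1 : R -> R) (mu alpha : R) : R :=
  let h := 1 / 2 - alpha in
  let A := sym_sum e (1 / 2) h - 2 * mu in
  let D := sym_diff e (1 / 2) h in
  - (D * (h * sym_diff d1 (1 / 2) h - 2 * A) - A * (h * sym_sum d1 (1 / 2) h - D))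
    / (2 * h ^ 2 * D ^ 2).

Lemma is_derive_s2 (e d1 : R -> R) (mu alpha : R) : alpha <> 1 / 2 ->
  is_derive e alpha (d1 alpha) -> is_derive e (1 - alpha) (d1 (1 - alpha)) ->
  e (1 - alpha) <> e alpha ->
  is_derive (s2 e mu) alpha (s2_deriv e d1 mu alpha).
Proof.
  intros Ha Hd Hd' Hne.
  assert (Hne' : e (1 - alpha) - e alpha <> 0) by (intro H; apply Hne; lra).
  unfold s2, s2_deriv, sym_sum, sym_diff.
  replace (1 / 2 + (1 / 2 - alpha)) with (1 - alpha) by field.
  replace (1 / 2 - (1 / 2 - alpha)) with alpha by field.
  auto_derive.
  - repeat split; try (exists (d1 (1 - alpha)); exact Hd'); try (exists (d1 alpha); exact Hd).
  - lra.
  - exact Hne'.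
  - change (1 + - alpha) with (1 - alpha).
    rewrite (is_derive_unique (fun x : R => e x) _ _ Hd),
      (is_derive_unique (fun x : R => e x) _ _ Hd').
    field. split; [exact Hne' | lra].
Qed.

Lemma skew_quotient_bound (h a C eta A D u v : R) :
  0 < h -> 0 < a -> a * h <= D ->
  Rabs A <= C * h ^ 2 -> Rabs u <= eta * h ^ 3 -> Rabs v <= eta * h ^ 2 ->
  Rabs (- (D * u - A * v) / (2 * h ^ 2 * D ^ 2)) <= eta * (a + C) / (2 * a ^ 2).
Proof.
  intros Hh Ha HD HA Hu Hv.
  assert (HD0 : 0 < D) by nra.
  assert (Hh2 : 0 < h ^ 2) by (apply pow_lt; lra).
  assert (HC : 0 <= C) by (pose proof (Rabs_pos A); nra).
  assert (Heta : 0 <= eta) by (pose proof (Rabs_pos v); nra).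
  assert (HN : Rabs (D * u - A * v) <= eta * h ^ 3 * (D + C * h)).
  { unfold Rminus. eapply Rle_trans; [apply Rabs_triang |].
    rewrite Rabs_Ropp, !Rabs_mult, (Rabs_pos_eq D) by lra.
    apply Rle_trans with (D * (eta * h ^ 3) + C * h ^ 2 * (eta * h ^ 2)); [| apply Req_le; ring].
    apply Rplus_le_compat; [apply Rmult_le_compat_l; lra |].
    apply Rmult_le_compat; [apply Rabs_pos | apply Rabs_pos | lra | lra]. }
  assert (Hkey : h * (D + C * h) * a ^ 2 <= (a + C) * D ^ 2).
  { assert (a * h * (a * D) <= D * (a * D)) by (apply Rmult_le_compat_r; nra).
    assert (C * (a * h) ^ 2 <= C * D ^ 2).
    { apply Rmult_le_compat_l; [exact HC | apply pow_incr; nra]. }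
    replace (h * (D + C * h) * a ^ 2) with (a * h * (a * D) + C * (a * h) ^ 2) by ring.
    replace ((a + C) * D ^ 2) with (D * (a * D) + C * D ^ 2) by ring.
    lra. }
  assert (Hden : 0 < 2 * h ^ 2 * D ^ 2) by (apply Rmult_lt_0_compat; [nra | apply pow_lt; lra]).
  unfold Rdiv. rewrite Rabs_mult, Rabs_Ropp, Rabs_inv, (Rabs_pos_eq (2 * h ^ 2 * D ^ 2)) by lra.
  assert (Ha2 : 0 < a ^ 2) by (apply pow_lt; lra).
  apply (Rmult_le_reg_r (2 * h ^ 2 * D ^ 2 * (2 * a ^ 2))); [nra |].
  replace (Rabs (D * u - A * v) * / (2 * h ^ 2 * D ^ 2) * (2 * h ^ 2 * D ^ 2 * (2 * a ^ 2)))
    with (Rabs (D * u - A * v) * (2 * a ^ 2)) by (field; nra).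
  replace (eta * (a + C) * / (2 * a ^ 2) * (2 * h ^ 2 * D ^ 2 * (2 * a ^ 2)))
    with (eta * h ^ 2 * ((a + C) * D ^ 2) * 2) by (field; lra).
  apply Rle_trans with (eta * h ^ 3 * (D + C * h) * (2 * a ^ 2)); [nra |].
  replace (eta * h ^ 3 * (D + C * h) * (2 * a ^ 2))
    with (eta * h ^ 2 * (h * (D + C * h) * a ^ 2) * 2) by ring.
  apply Rmult_le_compat_r; [lra |]. apply Rmult_le_compat_l; [nra | exact Hkey].
Qed.

Lemma s2_deriv_vanishes (e d1 d2 d3 : R -> R) (mu : R) :
  locally (1 / 2) (fun x =>
    is_derive e x (d1 x) /\ is_derive d1 x (d2 x) /\ is_derive d2 x (d3 x)) ->
  continuous d3 (1 / 2) -> e (1 / 2) = mu -> 0 < d1 (1 / 2) ->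
  forall eps, 0 < eps -> exists delta, 0 < delta /\
    forall alpha, 1 / 2 - delta < alpha < 1 / 2 -> Rabs (s2_deriv e d1 mu alpha) < eps.
Proof.
  intros Hd Hd3 He Ha eps Heps.
  set (a := d1 (1 / 2)) in *. set (C := 2 * (Rabs (d2 (1 / 2)) + 1)).
  assert (HC : 0 < C) by (unfold C; pose proof (Rabs_pos (d2 (1 / 2))); lra).
  set (eta := eps * a ^ 2 / (a + C)).
  assert (Heta : 0 < eta).
  { unfold eta. apply Rdiv_lt_0_compat; [| lra].
    apply Rmult_lt_0_compat; [lra | apply pow_lt; lra]. }
  destruct (at_right_0_interval _
    (filter_and _ _ (sym_diff_first_order _ _ _ _ _ Hd a Ha)
    (filter_and _ _ (sym_sum_second_order _ _ _ _ _ Hd)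
    (filter_and _ _ (sym_diff_remainder _ _ _ _ _ Hd eta Heta)
                    (sym_sum_remainder _ _ _ _ _ Hd Hd3 eta Heta)))))
    as [delta [Hdelta Hnear]].
  exists delta. split; [exact Hdelta |].
  intros alpha Halpha.
  destruct (Hnear (1 / 2 - alpha)) as [HD [HA [Hv Hu]]]; [lra |].
  rewrite He in HA, Hu. fold a C in HD, HA.
  assert (HD' : a * (1 / 2 - alpha) <= sym_diff e (1 / 2) (1 / 2 - alpha)).
  { pose proof (Rle_abs (2 * a * (1 / 2 - alpha) - sym_diff e (1 / 2) (1 / 2 - alpha))).
    rewrite Rabs_minus_sym in H. lra. }
  unfold s2_deriv. cbv zeta.
  eapply Rle_lt_trans; [apply (skew_quotient_bound _ a C eta); try lra; eassumption |].
  replace (eta * (a + C) / (2 * a ^ 2)) with (eps / 2) by (unfold eta; field; split; lra).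
  lra.
Qed.

(* For n0 = E X_- and p0 = E X_+ these are E (X - t)_- and E (X - t)_+,
   by [Eneg_shift] and [Epos_shift] below. *)
Definition mean_neg_part (F : R -> R) (n0 t : R) : R := n0 + RInt F 0 t.
Definition mean_pos_part (F : R -> R) (p0 t : R) : R := p0 - t + RInt F 0 t.

Section Expectiles.

Variable F : R -> R.
Hypothesis F_cdf : is_cdf F.
Hypothesis F_cont : continuity F.

Lemma cdf_range (x : R) : 0 <= F x <= 1.
Proof.
  destruct F_cdf as [F_mono [_ [F_lim_m F_lim_p]]]. split.
  - apply Rle_plus_epsilon. intros eps Heps. destruct (F_lim_m eps Heps) as [M HM].
    pose proof (HM (Rmin M x) (Rmin_l _ _)) as Hsmall. apply Rabs_def2 in Hsmall.
    pose proof (F_mono (Rmin M x) x (Rmin_r _ _)). lra.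
  - apply Rle_plus_epsilon. intros eps Heps. destruct (F_lim_p eps Heps) as [M HM].
    pose proof (HM (Rmax M x) (Rmax_l _ _)) as Hsmall. apply Rabs_def2 in Hsmall.
    pose proof (F_mono x (Rmax M x) (Rmax_r _ _)). lra.
Qed.

Lemma cdf_continuous (x : R) : continuous F x.
Proof. apply continuity_pt_filterlim, F_cont. Qed.

Lemma ex_RInt_cdf (a b : R) : ex_RInt F a b.
Proof. apply (ex_RInt_continuous (V := R_CompleteNormedModule)). intros; apply cdf_continuous. Qed.

Lemma RInt_cdf_Chasles (a b c : R) : RInt F a b + RInt F b c = RInt F a c.
Proof. apply (RInt_Chasles (V := R_CompleteNormedModule) F); apply ex_RInt_cdf. Qed.

Lemma RInt_cdf_bounds (a b : R) : a <= b -> 0 <= RInt F a b <= b - a.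
Proof.
  intro Hab. split.
  - apply RInt_ge_0; [exact Hab | apply ex_RInt_cdf | intros; apply cdf_range].
  - replace (b - a) with (RInt (fun _ => 1) a b) by (rewrite RInt_const; apply Rmult_1_r).
    apply RInt_le; [exact Hab | apply ex_RInt_cdf | apply ex_RInt_const | intros; apply cdf_range].
Qed.

Lemma RInt_one_minus_cdf (a b : R) : RInt (fun x => 1 - F x) a b = (b - a) - RInt F a b.
Proof.
  assert (H := RInt_minus (V := R_CompleteNormedModule) (fun _ => 1) F a b
    (ex_RInt_const a b 1) (ex_RInt_cdf a b)).
  change (RInt (fun x => 1 - F x) a b = RInt (fun _ => 1) a b - RInt F a b) in H.
  rewrite H, RInt_const. change ((b - a) * 1 - RInt F a b = b - a - RInt F a b). ring.
Qed.

Lemma Eneg_shift (s t n1 n2 : R) : Eneg F s n1 -> Eneg F t n2 -> n2 = n1 + RInt F s t.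
Proof.
  intros H1 H2. apply Rle_antisym; apply Rle_plus_epsilon; intros eps Heps;
  destruct (H1 (eps / 2)) as [M1 HM1]; try lra; destruct (H2 (eps / 2)) as [M2 HM2]; try lra;
  destruct (HM1 (Rmin M1 M2) (Rmin_l _ _)) as [pr1 Hp1];
  destruct (HM2 (Rmin M1 M2) (Rmin_r _ _)) as [pr2 Hp2];
  rewrite <- RInt_Reals in Hp1, Hp2; rewrite <- (RInt_cdf_Chasles (Rmin M1 M2) s t) in Hp2;
  apply Rabs_def2 in Hp1; apply Rabs_def2 in Hp2; lra.
Qed.

Lemma Epos_shift (s t p1 p2 : R) : Epos F s p1 -> Epos F t p2 -> p2 = p1 - (t - s) + RInt F s t.
Proof.
  intros H1 H2. apply Rle_antisym; apply Rle_plus_epsilon; intros eps Heps;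
  destruct (H1 (eps / 2)) as [M1 HM1]; try lra; destruct (H2 (eps / 2)) as [M2 HM2]; try lra;
  destruct (HM1 (Rmax M1 M2) (Rmax_l _ _)) as [pr1 Hp1];
  destruct (HM2 (Rmax M1 M2) (Rmax_r _ _)) as [pr2 Hp2];
  rewrite <- RInt_Reals, RInt_one_minus_cdf in Hp1, Hp2;
  rewrite <- (RInt_cdf_Chasles s t (Rmax M1 M2)) in Hp1;
  apply Rabs_def2 in Hp1; apply Rabs_def2 in Hp2; lra.
Qed.

Lemma Eneg_shift_nonneg (s t n : R) : Eneg F s n -> 0 <= n + RInt F s t.
Proof.
  intros H. apply Rle_plus_epsilon. intros eps Heps.
  destruct (H eps Heps) as [M HM]. destruct (HM (Rmin M t) (Rmin_l _ _)) as [pr Hp].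
  rewrite <- RInt_Reals in Hp. apply Rabs_def2 in Hp.
  pose proof (RInt_cdf_Chasles (Rmin M t) s t).
  pose proof (RInt_cdf_bounds (Rmin M t) t (Rmin_r _ _)). lra.
Qed.

Lemma Epos_shift_nonneg (s t p : R) : Epos F s p -> 0 <= p - (t - s) + RInt F s t.
Proof.
  intros H. apply Rle_plus_epsilon. intros eps Heps.
  destruct (H eps Heps) as [M HM]. destruct (HM (Rmax M t) (Rmax_l _ _)) as [pr Hp].
  rewrite <- RInt_Reals, RInt_one_minus_cdf in Hp. apply Rabs_def2 in Hp.
  pose proof (RInt_cdf_Chasles s t (Rmax M t)).
  pose proof (RInt_cdf_bounds t (Rmax M t) (Rmax_r _ _)). lra.
Qed.

Variables (n0 p0 : R).
Hypothesis F_neg0 : Eneg F 0 n0.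
Hypothesis F_pos0 : Epos F 0 p0.

Lemma mean_neg_part_pos (x : R) : 0 < F x -> 0 < mean_neg_part F n0 x.
Proof.
  intros HFx. destruct (continuous_pos_near F x (cdf_continuous x) HFx) as [h [Hh Hnear]].
  unfold mean_neg_part. rewrite <- (RInt_cdf_Chasles 0 (x - h) x).
  pose proof (Eneg_shift_nonneg 0 (x - h) n0 F_neg0).
  assert (0 < RInt F (x - h) x); [| lra].
  apply RInt_gt_0; [lra | intros y Hy; apply Hnear; lra | intros; apply cdf_continuous].
Qed.

Lemma mean_pos_part_pos (x : R) : F x < 1 -> 0 < mean_pos_part F p0 x.
Proof.
  intros HFx.
  destruct (continuous_pos_near (fun y => 1 - F y) x) as [h [Hh Hnear]]; [| lra |].
  { apply (continuous_minus (fun _ => 1) F); [apply continuous_const | apply cdf_continuous]. }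
  unfold mean_pos_part. pose proof (RInt_cdf_Chasles 0 x (x + h)).
  pose proof (Epos_shift_nonneg 0 (x + h) p0 F_pos0).
  assert (0 < RInt (fun y => 1 - F y) x (x + h)); [| rewrite RInt_one_minus_cdf in *; lra].
  apply RInt_gt_0; [lra | intros y Hy; apply Hnear; lra |].
  intros y _.
  apply (continuous_minus (fun _ => 1) F); [apply continuous_const | apply cdf_continuous].
Qed.

Lemma mean_abs_dev_pos (t : R) : nondegenerate F ->
  0 < mean_neg_part F n0 t + mean_pos_part F p0 t.
Proof.
  intros [x [HFx0 HFx1]].
  destruct F_cdf as [F_mono _].
  destruct (Rle_lt_dec x t) as [Hxt | Htx].
  - pose proof (mean_neg_part_pos t ltac:(pose proof (F_mono x t Hxt); lra)).
    pose proof (Epos_shift_nonneg 0 t p0 F_pos0).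
    unfold mean_pos_part. lra.
  - pose proof (mean_pos_part_pos t ltac:(pose proof (F_mono t x (Rlt_le _ _ Htx)); lra)).
    pose proof (Eneg_shift_nonneg 0 t n0 F_neg0).
    unfold mean_neg_part. lra.
Qed.

Lemma is_expectile_eq (tau t : R) : is_expectile F tau t ->
  tau * mean_pos_part F p0 t = (1 - tau) * mean_neg_part F n0 t.
Proof.
  intros [p [n [Hp [Hn Heq]]]].
  unfold mean_pos_part, mean_neg_part.
  rewrite <- (Rminus_0_r t) at 1.
  rewrite <- (Epos_shift 0 t p0 p F_pos0 Hp), <- (Eneg_shift 0 t n0 n F_neg0 Hn).
  exact Heq.
Qed.

Lemma is_expectile_half (t : R) : is_expectile F (1 / 2) t -> t = p0 - n0.
Proof.
  intros Ht. apply is_expectile_eq in Ht. unfold mean_pos_part, mean_neg_part in Ht. lra.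
Qed.

Lemma is_expectile_deriv_pos (e : R -> R) (tau l : R) : nondegenerate F ->
  (forall a, 0 < a < 1 -> is_expectile F a (e a)) -> 0 < tau < 1 ->
  is_derive e tau l -> 0 < l.
Proof.
  intros Hnd He Htau Hl.
  set (Phi := fun a => a * mean_pos_part F p0 (e a) - (1 - a) * mean_neg_part F n0 (e a)).
  assert (HPhi : is_derive Phi tau
    (mean_neg_part F n0 (e tau) + mean_pos_part F p0 (e tau)
     - l * ((1 - tau) * F (e tau) + tau * (1 - F (e tau))))).
  { unfold Phi, mean_pos_part, mean_neg_part. auto_derive.
    - repeat split; try (exists l; exact Hl); try apply ex_RInt_cdf;
        apply filter_forall; intros; apply F_cont.
    - rewrite (is_derive_unique (fun x : R => e x) _ _ Hl).
      change (fun x : R => F x) with F. ring. }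
  assert (HPhi0 : is_derive Phi tau 0).
  { apply (is_derive_ext_loc (fun _ => 0)); [| exact (is_derive_const (V := R_NormedModule) 0 tau)].
    apply (locally_interval _ tau 0 1); [exact (proj1 Htau) | exact (proj2 Htau) |].
    intros a Ha0 Ha1. unfold Phi.
    rewrite (is_expectile_eq a (e a)) by (apply He; split; assumption).
    symmetry. apply Rminus_diag. }
  assert (Hval := eq_trans (eq_sym (is_derive_unique _ _ _ HPhi)) (is_derive_unique _ _ _ HPhi0)).
  pose proof (mean_abs_dev_pos (e tau) Hnd). pose proof (cdf_range (e tau)).
  assert (0 <= (1 - tau) * F (e tau) + tau * (1 - F (e tau))) by nra.
  nra.
Qed.

End Expectiles.

Theorem mainTheorem4 (F : R -> R) (e : R -> R) (mu : R) :
  is_cdf F ->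
  nondegenerate F ->
  finite_first_moment F ->
  continuity F ->
  is_mean F mu ->
  (forall tau, 0 < tau < 1 -> is_expectile F tau (e tau)) ->
  C4_on_01 e ->
  exists ds : R -> R,
    (forall alpha, 0 < alpha < 1 / 2 ->
        derivable_pt_lim (s2 e mu) alpha (ds alpha)) /\
    (forall eps, 0 < eps -> exists delta, 0 < delta /\
        forall alpha, 1 / 2 - delta < alpha < 1 / 2 -> Rabs (ds alpha) < eps).
Proof.
  (* The finite first moment is already part of [is_mean]. *)
  intros F_cdf F_nondeg _ F_cont [p0 [n0 [F_pos0 [F_neg0 ->]]]] e_expectile
    [d1 [d2 [d3 [d4 e_C4]]]].
  assert (e_derivs : forall a, 0 < a < 1 ->
    is_derive e a (d1 a) /\ is_derive d1 a (d2 a) /\ is_derive d2 a (d3 a)).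
  { intros a Ha. destruct (e_C4 a Ha) as [H1 [H2 [H3 _]]].
    split; [| split]; apply is_derive_Reals; assumption. }
  assert (d1_pos : forall a, 0 < a < 1 -> 0 < d1 a).
  { intros a Ha. apply (is_expectile_deriv_pos F F_cdf F_cont n0 p0 F_neg0 F_pos0 e a);
      [exact F_nondeg | exact e_expectile | exact Ha | apply e_derivs, Ha]. }
  exists (s2_deriv e d1 (p0 - n0)). split.
  - intros alpha Halpha.
    assert (e_lt : e alpha < e (1 - alpha)).
    { apply (is_derive_pos_lt e d1); [lra | intros; apply e_derivs | intros; apply d1_pos]; lra. }
    apply is_derive_Reals, is_derive_s2; [lra | apply e_derivs; lra | apply e_derivs; lra | lra].
  - apply (s2_deriv_vanishes e d1 d2 d3).
    + apply (locally_interval _ _ 0 1); simpl; [lra | lra |].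
      intros a Ha0 Ha1. apply e_derivs. simpl in Ha0, Ha1. lra.
    + apply (is_derive_continuous _ _ (d4 (1 / 2))), is_derive_Reals, e_C4. lra.
    + apply (is_expectile_half F F_cont n0 p0 F_neg0 F_pos0), e_expectile. lra.
    + apply d1_pos. lra.
Qed.
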